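(* Fix integers $N\ge 2$ and $K\ge 1$. The class $M^{\text{RESCAL}}_{\lfloor N/32-1\rfloor}$ is not universal, i.e. $\pi(\mathcal{M}^{\text{RESCAL}}_{\lfloor N/32-1\rfloor})\ne\pi(\mathbb{R}^{N\times N\times K})$.
   Context: There are $N$ entities and $K$ relations. A score-based model assigns a score $s_k(i,j)\in\mathbb{R}$ to each triple, $i,j\in\{1,\dots,N\}$, $k\in\{1,\dots,K\}$; its scoring tensor $\mathcal{S}\in\mathbb{R}^{N\times N\times K}$ has frontal slices $\mathbf{S}_k$ with $[\mathbf{S}_k]_{ij}=s_k(i,j)$. For a real $N\times N$ matrix $\mathbf{S}$, $\pi(\mathbf{S})$ is the matrix of dense ranks: $\pi_{ij}(\mathbf{S})=1+$ (number of distinct values among entries of $\mathbf{S}$ strictly larger than $s_{ij}$). For tensors, $\pi$ acts slicewise; for a set $X$, $\pi(X)=\{\pi(x):x\in X\}$. RESCAL of size $r$: parameters $\mathbf{A}\in\mathbb{R}^{N\times r}$ (rows $\mathbf{a}_i$), $\mathbf{R}_1,\dots,\mathbf{R}_K\in\mathbb{R}^{r\times r}$, score $\mathbf{a}_i^T\mathbf{R}_k\mathbf{a}_j$; $\mathcal{M}^{\text{RESCAL}}_r$ is the set of scoring tensors of all such models. *)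

From mathcomp Require Import all_boot all_order all_algebra.
From mathcomp Require Import reals.
Set Implicit Arguments. Unset Strict Implicit. Unset Printing Implicit Defensive.
Import Order.TTheory GRing.Theory Num.Theory.
Local Open Scope ring_scope.

Definition tensor (R : Type) (N K : nat) := {ffun 'I_K -> 'M[R]_N}.

Definition entry_values (R : realType) (N : nat) (S : 'M[R]_N) : seq R :=
  undup [seq S i j | i <- enum 'I_N, j <- enum 'I_N].

Definition dense_rank (R : realType) (N : nat) (S : 'M[R]_N) : 'M[nat]_N :=
  \matrix_(i, j) (1 + count (fun v => (S i j < v)%R) (entry_values S))%N.

Definition tensor_rank (R : realType) (N K : nat) (T : tensor R N K)
  : tensor nat N K := [ffun k => dense_rank (T k)].

Definition rank_image (R : realType) (N K : nat) (X : tensor R N K -> Prop)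
  : tensor nat N K -> Prop :=
  fun P => exists T, X T /\ tensor_rank T = P.

(* M^RESCAL_r : scoring tensors with [S_k]_ij = a_i^T R_k a_j, i.e. S_k = A R_k A^T. *)
Definition rescal_class (R : realType) (N K r : nat) : tensor R N K -> Prop :=
  fun T => exists (A : 'M[R]_(N, r)) (Rk : 'I_K -> 'M[R]_r),
    T = [ffun k => A *m Rk k *m A^T].

Definition all_tensors (R : realType) (N K : nat) : tensor R N K -> Prop :=
  fun _ => True.

(** A real matrix has the dense ranks of the identity only if it has one
    constant value [a] on the diagonal and a different constant value [b] off
    it, i.e. equals [(a - b) I + b J] with [J] the all-ones matrix.  Such a
    matrix has rank at least [N - 1], whereas every RESCAL slice [A R_k A^T]
    has rank at most [r]; so no RESCAL model of size [r <= N - 2] realises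
    the dense ranks of the identity tensor. *)

From mathcomp Require Import all_boot all_order all_algebra.
From mathcomp Require Import reals.
From mathcomp Require Import zify.
Set Implicit Arguments. Unset Strict Implicit. Unset Printing Implicit Defensive.
Import Order.TTheory GRing.Theory Num.Theory.
Local Open Scope ring_scope.

Lemma count_gt_ge_mem (disp : Order.disp_t) (T : porderType disp) (x : T) s :
  (count (fun v => x < v)%O s < count (fun v => x <= v)%O s)%N = (x \in s).
Proof. exact: (@count_lt_le_mem _ T^d x s). Qed.

Section DenseRank.

Variables (R : realType) (N : nat).
Implicit Types (S : 'M[R]_N) (i j : 'I_N).

Lemma mem_entry_values S i j : S i j \in entry_values S.
Proof. by rewrite mem_undup; apply/allpairsP; exists (i, j); rewrite !mem_enum. Qed.

Lemma dense_rank_lt S (i j i' j' : 'I_N) :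
  S i j < S i' j' -> (dense_rank S i' j' < dense_rank S i j)%N.
Proof.
move=> lt_ij; rewrite !mxE ltn_add2l.
apply: (@leq_trans (count (fun v => S i' j' <= v) (entry_values S))).
  by rewrite count_gt_ge_mem mem_entry_values.
by apply: sub_count => v /= /(lt_le_trans lt_ij).
Qed.

Lemma dense_rank_eqE S (i j i' j' : 'I_N) :
  (dense_rank S i j == dense_rank S i' j') = (S i j == S i' j').
Proof.
apply/eqP/eqP => [eq_rk|eq_S]; last by rewrite !mxE eq_S.
by case: (ltgtP (S i j) (S i' j')) => // /dense_rank_lt; rewrite eq_rk ltnn.
Qed.

Lemma dense_rank_eq_pattern S S' (i j i' j' : 'I_N) :
  dense_rank S = dense_rank S' -> (S i j == S i' j') = (S' i j == S' i' j').
Proof. by move=> eqSS'; rewrite -!dense_rank_eqE eqSS'. Qed.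

End DenseRank.

Lemma scalar_mx_pattern (F : nzRingType) n (i j i' j' : 'I_n) :
  ((1%:M : 'M[F]_n) i j == 1%:M i' j') = ((i == j) == (i' == j')).
Proof.
rewrite !mxE; case: (i == j); case: (i' == j');
  by rewrite ?eqxx ?oner_eq0 // eq_sym oner_eq0.
Qed.

Lemma scalar_add_const_of_identity_pattern (F : nzRingType) n (M : 'M[F]_n)
    (i0 i1 : 'I_n) : i0 != i1 ->
  (forall i j i' j', (M i j == M i' j') = ((i == j) == (i' == j'))) ->
  exists a b, a != 0 /\ M = a%:M + const_mx b.
Proof.
move=> /negbTE neq_i01 patM; exists (M i0 i0 - M i0 i1), (M i0 i1); split.
  by rewrite subr_eq0 patM eqxx neq_i01.
apply/matrixP => i j; rewrite !mxE.
have [<-|/negbTE neq_ij] := eqVneq i j.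
  by rewrite mulr1n subrK; apply/eqP; rewrite patM !eqxx.
by rewrite mulr0n add0r; apply/eqP; rewrite patM neq_ij neq_i01.
Qed.

Lemma mxrank_const_mx_le1 (F : fieldType) m n (b : F) :
  (\rank (const_mx b : 'M_(m, n)) <= 1)%N.
Proof.
have -> : const_mx b = (const_mx b : 'M_(m, 1)) *m const_mx 1 :> 'M_(m, n).
  by apply/matrixP => i j; rewrite !mxE big_ord1 !mxE mulr1.
exact: mulmx_max_rank.
Qed.

Lemma mxrank_scalar_add_const (F : fieldType) n (a b : F) : a != 0 ->
  (n <= \rank (a%:M + const_mx b : 'M_n)%R + 1)%N.
Proof.
move=> a_neq0; have := mxrank_add (a%:M + const_mx b : 'M_n)%R (const_mx (- b)).
have -> : a%:M + const_mx b + const_mx (- b) = a%:M :> 'M_n.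
  by apply/matrixP => i j; rewrite !mxE addrK.
rewrite -scalemx1 mxrank_scale_nz // mxrank1 => /leq_trans; apply.
by rewrite leq_add2l mxrank_const_mx_le1.
Qed.

Lemma mxrank_sandwich_le (F : fieldType) m r (A : 'M[F]_(m, r)) (B : 'M_r) :
  (\rank (A *m B *m A^T) <= r)%N.
Proof. by rewrite -mulmxA; apply: leq_trans (mxrankM_maxl _ _) (rank_leq_col A). Qed.

Lemma rescal_not_universal (R : realType) N K r :
  (r + 2 <= N)%N -> (0 < K)%N ->
  rank_image (@rescal_class R N K r) <> rank_image (@all_tensors R N K).
Proof.
move=> le_rN K_gt0 eq_images.
pose id_tensor : tensor R N K := [ffun=> 1%:M].
pose k0 := Ordinal K_gt0.
have [_ [[A [B ->]] eq_tensor_ranks]] :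
    rank_image (@rescal_class R N K r) (tensor_rank id_tensor).
  by rewrite eq_images; exists id_tensor.
have := congr1 (fun P : tensor nat N K => P k0) eq_tensor_ranks.
rewrite /= !ffunE => eq_ranks.
have N_gt0 : (0 < N)%N by lia.
have N_gt1 : (1 < N)%N by lia.
have [a [b [a_neq0 eq_slice]]] :
    exists a b, a != 0 /\ A *m B k0 *m A^T = a%:M + const_mx b.
  apply: (@scalar_add_const_of_identity_pattern _ _ _
    (Ordinal N_gt0) (Ordinal N_gt1)) => // i j i' j'.
  by rewrite (dense_rank_eq_pattern i j i' j' eq_ranks) scalar_mx_pattern.
have rank_lb := @mxrank_scalar_add_const _ N _ b a_neq0.
rewrite -eq_slice in rank_lb.
have rank_ub : (\rank (A *m B k0 *m A^T) <= r)%N := mxrank_sandwich_le A (B k0).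
lia.
Qed.

Theorem theorem6 (R : realType) (N K : nat) (hN : (2 <= N)%N) (hK : (1 <= K)%N) :
  rank_image (@rescal_class R N K (N %/ 32).-1)
  <> rank_image (@all_tensors R N K).
Proof. by apply: rescal_not_universal => //; lia. Qed.
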